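(* Let $\Omega \subset \mathbb{R}^N$ be closed and nonempty, let $p>1$, $\mu>0$, and let $f(x) := \frac{\mu}{p} d_\Omega(x)^p$. Then (1) $f$ is globally $p$-conditioned with constant $\mu$: for all $x\in\mathbb{R}^N$, $\frac{\mu}{p} d_{\operatorname{argmin} f}(x)^p \le f(x)-\inf f$; (2) $f$ is globally $p$-submetric regular with constant $\mu$: for all $x\in\mathbb{R}^N$ and all $x^*\in\partial_L f(x)$, $\mu\, d_{\operatorname{argmin} f}(x)^{p-1}\le \|x^*\|$.
   Context: For a closed set $S\subset\mathbb{R}^N$ (not necessarily convex), $d_S(x) := \inf_{y\in S}\|y-x\|$ (Euclidean norm). For $g:\mathbb{R}^N\to\mathbb{R}$, the Fréchet subdifferential $\partial_F g(x)$ is the set of $x^*$ with $\liminf_{y\to x} \frac{g(y)-g(x)-\langle x^*,y-x\rangle}{\|y-x\|}\ge 0$; the limiting subdifferential $\partial_L g(x)$ is the set of $x^*$ for which there exist $x_n\to x$ and $x_n^*\to x^*$ with $g(x_n)\to g(x)$ and $x_n^*\in\partial_F g(x_n)$. *)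

From HB Require Import structures.
From mathcomp Require Import all_boot all_order all_algebra.
From mathcomp Require Import all_classical all_reals all_analysis.
Set Implicit Arguments. Unset Strict Implicit. Unset Printing Implicit Defensive.
Import Order.TTheory GRing.Theory Num.Theory numFieldNormedType.Exports.
Local Open Scope classical_set_scope.
Local Open Scope ring_scope.

Section Defs.
Context {R : realType} {N : nat}.
Notation V := 'rV[R]_N.

Definition edot (x y : V) : R := \sum_(i < N) x ord0 i * y ord0 i.
Definition enorm (x : V) : R := Num.sqrt (edot x x).

Definition dist_set (S : set V) (x : V) : R := inf [set enorm (y - x) | y in S].

Definition argmin_set (g : V -> R) : set V := [set x | forall y, g x <= g y].
Definition inf_val (g : V -> R) : R := inf (range g).

(* Frechet subdifferential: liminf_{y->x} (g y - g x - <x*, y-x>)/||y-x|| >= 0,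
   written out with epsilon/delta. *)
Definition frechet_subdiff (g : V -> R) (x : V) : set V :=
  [set xs | forall e : R, 0 < e -> exists d : R, 0 < d /\
     forall y : V, 0 < enorm (y - x) -> enorm (y - x) < d ->
       - e * enorm (y - x) <= g y - g x - edot xs (y - x)].

Definition econv (u : nat -> V) (l : V) : Prop :=
  forall e : R, 0 < e -> exists M : nat, forall n, (M <= n)%N -> enorm (u n - l) < e.

Definition limiting_subdiff (g : V -> R) (x : V) : set V :=
  [set xs | exists (u : nat -> V) (us : nat -> V),
     [/\ econv u x, econv us xs, (fun n => g (u n) : R^o) @ \oo --> (g x : R^o) &
         forall n, us n \in frechet_subdiff g (u n)]].
End Defs.

(* Let u be a point at distance d > 0 from Omega, choose y in Omega
   with |y - u| <= d (1 + t^2), and move from u towards y by the fraction t.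
   The distance to Omega drops by the factor 1 - t + O(t^2), so f drops by
   t mu d^p (1 + O(t)).  A Frechet subgradient xs at u only allows a drop of
   (|xs| + e) times the step length t d (1 + O(t^2)); letting t and then e go
   to 0 gives mu d^(p-1) <= |xs|.  Both sides of this bound are continuous, so
   it passes to limiting subgradients.  Part (1) holds because f >= 0 vanishes
   on Omega, hence inf f = 0 and Omega is contained in argmin f. *)

From HB Require Import structures.
From mathcomp Require Import all_boot all_order all_algebra.
From mathcomp Require Import all_classical all_reals all_analysis.
From mathcomp Require Import ring lra.
Set Implicit Arguments.
Unset Strict Implicit.
Unset Printing Implicit Defensive.
Import Order.TTheory GRing.Theory Num.Theory numFieldNormedType.Exports.
Local Open Scope classical_set_scope.
Local Open Scope ring_scope.

Section Euclidean.
Context {R : realType} {N : nat}.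
Implicit Types (a : R) (x y z : 'rV[R]_N).

Lemma edotC x y : edot x y = edot y x.
Proof. by apply: eq_bigr => i _; rewrite mulrC. Qed.

Lemma edotDl x y z : edot (x + y) z = edot x z + edot y z.
Proof. by rewrite /edot -big_split; apply: eq_bigr => i _; rewrite !mxE mulrDl. Qed.

Lemma edotZl a x y : edot (a *: x) y = a * edot x y.
Proof. by rewrite /edot mulr_sumr; apply: eq_bigr => i _; rewrite !mxE mulrA. Qed.

Lemma edotBl x y z : edot (x - y) z = edot x z - edot y z.
Proof. by rewrite edotDl -scaleN1r edotZl mulN1r. Qed.

Lemma edotDr x y z : edot x (y + z) = edot x y + edot x z.
Proof. by rewrite !(edotC x) edotDl. Qed.

Lemma edotZr a x y : edot x (a *: y) = a * edot x y.
Proof. by rewrite !(edotC x) edotZl. Qed.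

Lemma edotBr x y z : edot x (y - z) = edot x y - edot x z.
Proof. by rewrite !(edotC x) edotBl. Qed.

Lemma edot_ge0 x : 0 <= edot x x.
Proof. by apply: sumr_ge0 => i _; rewrite -expr2 sqr_ge0. Qed.

Lemma edot_eq0 x : edot x x = 0 -> x = 0.
Proof.
move=> /eqP; rewrite psumr_eq0 => [/allP x0|i _]; last by rewrite -expr2 sqr_ge0.
apply/rowP => i; rewrite mxE; apply/eqP.
by move/x0: (mem_index_enum i); rewrite mulf_eq0 orbb.
Qed.

Lemma edot0l x : edot 0 x = 0.
Proof. by rewrite -(scale0r 0) edotZl mul0r. Qed.

Lemma edot_sqr_le x y : edot x y ^+ 2 <= edot x x * edot y y.
Proof.
set X := edot x x; set Y := edot y y; set Z := edot x y.
have [X0|Xn0] := eqVneq X 0.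
  by rewrite /Z (edot_eq0 X0) edot0l X0 expr0n mul0r.
have Xgt0 : 0 < X by rewrite lt_def Xn0 edot_ge0.
have := edot_ge0 (X *: y - Z *: x).
rewrite !(edotBl, edotBr, edotZl, edotZr) (edotC y x) -/X -/Y -/Z.
have -> : X * (X * Y - Z * Z) - Z * (X * Z - Z * X) = X * (X * Y - Z ^+ 2) by ring.
by rewrite pmulr_rge0 // subr_ge0 mulrC.
Qed.

Lemma enorm_ge0 x : 0 <= enorm x.
Proof. exact: sqrtr_ge0. Qed.

Lemma enorm_sqr x : enorm x ^+ 2 = edot x x.
Proof. by rewrite sqr_sqrtr // edot_ge0. Qed.

Lemma enorm0 : enorm (0 : 'rV[R]_N) = 0.
Proof. by rewrite /enorm edot0l sqrtr0. Qed.

Lemma enormZ a x : enorm (a *: x) = `|a| * enorm x.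
Proof.
by rewrite /enorm edotZl edotZr mulrA -expr2 sqrtrM ?sqr_ge0 // sqrtr_sqr.
Qed.

Lemma enormN x : enorm (- x) = enorm x.
Proof. by rewrite -scaleN1r enormZ normrN normr1 mul1r. Qed.

Lemma edot_le_enorm x y : `|edot x y| <= enorm x * enorm y.
Proof.
rewrite -(@ler_pXn2r _ 2) ?nnegrE ?mulr_ge0 ?enorm_ge0 //.
by rewrite exprMn !enorm_sqr real_normK ?num_real // edot_sqr_le.
Qed.

Lemma enormD_le x y : enorm (x + y) <= enorm x + enorm y.
Proof.
rewrite -(@ler_pXn2r _ 2) ?nnegrE ?addr_ge0 ?enorm_ge0 //.
rewrite enorm_sqr edotDl !edotDr sqrrD !enorm_sqr (edotC y x).
have := edot_le_enorm x y; have := ler_norm (edot x y); lra.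
Qed.

Lemma enorm_lipschitz x y : `|enorm x - enorm y| <= enorm (x - y).
Proof.
have tri z w : enorm z - enorm w <= enorm (z - w).
  by rewrite lerBlDr -{1}(subrK w z) enormD_le.
rewrite ler_norml tri andbT -[enorm x - enorm y]opprB lerN2.
by rewrite -[x - y]opprB enormN tri.
Qed.

End Euclidean.

Section DistanceFunction.
Context {R : realType} {N : nat}.
Implicit Types (t : R) (x y z : 'rV[R]_N).
Variable S : set 'rV[R]_N.
Hypothesis S0 : S !=set0.

Lemma dist_set_ge0 x : 0 <= dist_set S x.
Proof.
case: S0 => y Sy; apply: lb_le_inf; first by exists (enorm (y - x)), y.
by move=> _ [z _ <-]; apply: enorm_ge0.
Qed.

Lemma dist_set_le x y : S y -> dist_set S x <= enorm (y - x).
Proof.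
move=> Sy; apply: ge_inf; last by exists y.
by exists 0 => _ [z _ <-]; apply: enorm_ge0.
Qed.

Lemma dist_set_eq0 x : S x -> dist_set S x = 0.
Proof.
move=> Sx; apply/eqP; rewrite eq_le dist_set_ge0 andbT.
by rewrite -(enorm0 (N := N)) -(subrr x) dist_set_le.
Qed.

Lemma dist_set_approx x e : 0 < e ->
  exists2 y, S y & enorm (y - x) < dist_set S x + e.
Proof.
case: S0 => y0 Sy0 e0.
have [||_ [y Sy <-]] := @inf_lt R [set enorm (y - x) | y in S] (dist_set S x + e).
- by exists (enorm (y0 - x)), y0.
- by rewrite ltrDl.
by exists y.
Qed.

Lemma dist_set_lipschitz x z : `|dist_set S x - dist_set S z| <= enorm (x - z).
Proof.
have lip y w : dist_set S y <= dist_set S w + enorm (w - y).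
  case: S0 => y0 Sy0; rewrite -lerBlDr.
  apply: lb_le_inf; first by exists (enorm (y0 - w)), y0.
  move=> _ [v Sv <-]; rewrite lerBlDr.
  apply: le_trans (dist_set_le y Sv) _.
  have -> : v - y = (v - w) + (w - y) by rewrite addrA subrK.
  exact: enormD_le.
have := lip x z; have := lip z x; rewrite -[z - x]opprB enormN ler_norml; lra.
Qed.

Lemma dist_set_segment x y t : S y -> 0 <= t <= 1 ->
  dist_set S (x + t *: (y - x)) <= (1 - t) * enorm (y - x).
Proof.
move=> Sy /andP[t0 t1]; apply: le_trans (dist_set_le _ Sy) _.
have -> : y - (x + t *: (y - x)) = (1 - t) *: (y - x).
  by rewrite scalerBl scale1r opprD addrA.
by rewrite enormZ ger0_norm // subr_ge0.
Qed.

Lemma dist_setS (T : set 'rV[R]_N) x : S `<=` T -> dist_set T x <= dist_set S x.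
Proof.
case: S0 => y0 Sy0 ST; apply: lb_le_inf; first by exists (enorm (y0 - x)), y0.
move=> _ [y /ST Ty <-]; apply: ge_inf; last by exists y.
by exists 0 => _ [z _ <-]; apply: enorm_ge0.
Qed.

End DistanceFunction.

Lemma econv_lipschitz_cvg {R : realType} {N : nat} (g : 'rV[R]_N -> R) u x :
  (forall y z, `|g y - g z| <= enorm (y - z)) -> econv u x ->
  (fun n => g (u n)) @ \oo --> g x.
Proof.
move=> g_lip ux; apply/cvgrPdist_lt => e /ux[M uxM]; exists M => // n /uxM.
by apply: le_lt_trans; rewrite -enormN opprB g_lip.
Qed.

Section RealInequalities.
Context {R : realType}.
Implicit Types a b d e p r s t : R.

Lemma ler_of_linear_slack a b K t0 : 0 < t0 ->
  (forall t, 0 < t -> t < t0 -> a <= b + t * K) -> a <= b.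
Proof.
move=> t0_gt0 slack; apply/ler_addgt0Pr => e e0.
pose t := Order.min (t0 / 2) (e / (`|K| + 1)).
have K1 : 0 < `|K| + 1 by rewrite ltr_wpDl.
have t_gt0 : 0 < t by rewrite lt_min !divr_gt0.
have t_lt : t < t0 by rewrite gt_min ltr_pdivrMr // ltr_pMr // ltr1n.
apply: le_trans (slack t t_gt0 t_lt) _; rewrite lerD2l.
apply: le_trans (ler_norm _) _; rewrite normrM gtr0_norm //.
apply: le_trans (_ : e / (`|K| + 1) * (`|K| + 1) <= _); last by rewrite divfK ?gt_eqF.
by rewrite ler_pM // ?(ltW t_gt0) // ?ge_min ?lexx ?orbT // lerDl.
Qed.

Lemma ler_of_perturbation a b p t0 : 0 <= b -> 0 <= p -> 0 < t0 ->
  (forall t, 0 < t -> t < t0 -> a * (1 - t) <= (1 + p * t) * (1 + t ^+ 2) * b) ->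
  a <= b.
Proof.
move=> b0 p0 t0_gt0 perturbed.
apply: (@ler_of_linear_slack _ _ (a + (2 * p + 1) * b) (Order.min t0 1)).
  by rewrite lt_min t0_gt0 ltr01.
move=> t t_gt0; rewrite lt_min => /andP[/(perturbed t t_gt0) le_ab t1].
have poly_le : (1 + p * t) * (1 + t ^+ 2) <= 1 + (2 * p + 1) * t.
  have tt : t ^+ 2 <= t by rewrite expr2 ger_pMr // ltW.
  have : p * (t * t ^+ 2) <= p * t by rewrite ler_wpM2l // ger_pMr // (le_trans tt) // ltW.
  lra.
have := ler_wpM2r b0 poly_le; lra.
Qed.

Lemma powR1B_mul1D_le1 s p : 0 <= s < 1 -> 0 <= p -> (1 - s) `^ p * (1 + p * s) <= 1.
Proof.
move=> /andP[s0 s1] p0; rewrite /powR gt_eqF ?subr_gt0 //.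
have ln_le : ln (1 - s) <= - s.
  by rewrite le_ln1Dx // ltrNl opprK (le_lt_trans _ s1) // lerN10.
have : expR (p * ln (1 - s)) <= (expR (p * s))^-1.
  by rewrite -expRN ler_expR -mulrN ler_wpM2l.
move/(ler_wpM2r (addr_ge0 ler01 (mulr_ge0 p0 s0)))/le_trans; apply.
by rewrite ler_pdivrMl ?expR_gt0 // mulr1 expR_ge1Dx.
Qed.

Lemma powR_gap_ge d r s p : 0 <= d -> 0 <= r <= (1 - s) * d -> 0 <= s < 1 -> 0 <= p ->
  p * s * d `^ p <= (1 + p * s) * (d `^ p - r `^ p).
Proof.
move=> d0 /andP[r0 rd] s01 p0; have /andP[s0 s1] := s01.
have ps0 : 0 <= p * s by rewrite mulr_ge0.
have rp : r `^ p <= (1 - s) `^ p * d `^ p.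
  rewrite -powRM ?subr_ge0 ?(ltW s1) //.
  by apply: ge0_ler_powR; rewrite ?nnegrE ?mulr_ge0 ?subr_ge0 ?(ltW s1).
have Q := powR1B_mul1D_le1 s01 p0.
have dp0 := powR_ge0 d p.
have : (1 + p * s) * r `^ p <= (1 + p * s) * ((1 - s) `^ p * d `^ p).
  by rewrite ler_wpM2l // addr_ge0.
have : (1 - s) `^ p * (1 + p * s) * d `^ p <= d `^ p by rewrite ler_piMl.
nra.
Qed.

End RealInequalities.

Lemma frechet_subdiff_descent {R : realType} {N : nat} (g : 'rV[R]_N -> R) u xs :
  xs \in frechet_subdiff g u -> forall e : R, 0 < e ->
  exists2 delta : R, 0 < delta & forall v, 0 < enorm (v - u) -> enorm (v - u) < delta ->
    g u - g v <= (e + enorm xs) * enorm (v - u).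
Proof.
rewrite inE => xs_sub e e0; have [delta [delta0 near_u]] := xs_sub e e0.
exists delta => // v vu0 vu_delta; have := near_u v vu0 vu_delta.
have : - edot xs (v - u) <= enorm xs * enorm (v - u).
  by apply: le_trans (edot_le_enorm _ _); rewrite -normrN ler_norm.
lra.
Qed.

Definition dist_pow {R : realType} {N : nat} (S : set 'rV[R]_N) (p mu : R) x : R :=
  mu / p * dist_set S x `^ p.

Section DistPow.
Context {R : realType} {N : nat}.
Variables (S : set 'rV[R]_N) (p mu : R).
Hypotheses (S0 : S !=set0) (p1 : 1 < p) (mu0 : 0 < mu).
Local Notation f := (dist_pow S p mu).

Let p0 : 0 < p. Proof. exact: lt_trans p1. Qed.

Lemma dist_pow_ge0 x : 0 <= f x.
Proof. by rewrite mulr_ge0 ?powR_ge0 // divr_ge0 // ltW. Qed.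

Lemma dist_pow_eq0 x : S x -> f x = 0.
Proof. by move=> Sx; rewrite /dist_pow dist_set_eq0 // powR0 ?mulr0 // gt_eqF. Qed.

Lemma sub_argmin_dist_pow : S `<=` argmin_set f.
Proof. by move=> x Sx y; rewrite dist_pow_eq0 // dist_pow_ge0. Qed.

Lemma inf_val_dist_pow : inf_val f = 0.
Proof.
case: S0 => x Sx; apply/eqP; rewrite eq_le; apply/andP; split.
  rewrite -(dist_pow_eq0 Sx); apply: ge_inf; last by exists x.
  by exists 0 => _ [y _ <-]; apply: dist_pow_ge0.
by apply: lb_le_inf; [exists (f x), x | move=> _ [y _ <-]; apply: dist_pow_ge0].
Qed.

Lemma dist_pow_steep_descent u (t : R) : 0 < dist_set S u -> 0 < t < 1 / 2 ->
  exists v, 0 < enorm (v - u) <= t * dist_set S u * (1 + t ^+ 2) /\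
    t * (1 - t) * (mu * dist_set S u `^ p) <= (1 + p * t) * (f u - f v).
Proof.
set d := dist_set S u => d0 /andP[t0 t_half].
(* The defect d t^2 of the near-projection y is negligible against the step t. *)
have [y Sy yu] := dist_set_approx S0 u (mulr_gt0 d0 (exprn_gt0 2 t0)).
set c := enorm (y - u); have dc : d <= c by apply: dist_set_le.
have cd : c <= d * (1 + t ^+ 2) by rewrite mulrDr mulr1 ltW.
exists (u + t *: (y - u)); rewrite addrC addKr enormZ ger0_norm ?(ltW t0) // -/c.
split.
  rewrite mulr_gt0 ?(lt_le_trans d0 dc) //=.
  by rewrite -mulrA ler_wpM2l // ltW.
set s := t * (1 - t); set r := dist_set S (u + t *: (y - u)).
have r_shrink : r <= (1 - s) * d.
  apply: le_trans (dist_set_segment _ Sy _) _; first by apply/andP; lra.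
  have t1 : 0 <= 1 - t by lra.
  have := ler_wpM2l t1 cd; have : 0 <= d * t ^+ 3 by rewrite mulr_ge0 ?exprn_ge0 // ltW.
  rewrite -/c /s; lra.
have r_bounds : 0 <= r <= (1 - s) * d by rewrite dist_set_ge0.
have s_bounds : 0 <= s < 1 by apply/andP; split; rewrite /s; nra.
have /andP[s0 _] := s_bounds.
have := powR_gap_ge (ltW d0) r_bounds s_bounds (ltW p0).
rewrite /dist_pow -/d -/r -mulrBr => gap.
have m0 : 0 <= mu / p by rewrite divr_ge0 // ltW.
have ps0 : 0 < 1 + p * s.
  by apply: ltr_wpDr; [rewrite mulr_ge0 // ltW | exact: ltr01].
have gap0 : 0 <= d `^ p - r `^ p.
  rewrite -(pmulr_rge0 (d `^ p - r `^ p) ps0).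
  by apply: le_trans _ gap; rewrite mulr_ge0 ?powR_ge0 // mulr_ge0 // ltW.
have ps_pt : 1 + p * s <= 1 + p * t.
  by rewrite lerD2l ler_wpM2l ?(ltW p0) // /s ger_pMr // gerBl ltW.
apply: le_trans (_ : mu / p * ((1 + p * s) * (d `^ p - r `^ p)) <= _).
  have -> : s * (mu * d `^ p) = mu / p * (p * s * d `^ p) by field; rewrite gt_eqF.
  by rewrite ler_wpM2l.
by rewrite mulrCA ler_wpM2r // mulr_ge0.
Qed.

Lemma frechet_subdiff_dist_pow u xs : xs \in frechet_subdiff f u ->
  mu * dist_set S u `^ (p - 1) <= enorm xs.
Proof.
move=> /frechet_subdiff_descent descent.
have := dist_set_ge0 S0 u; rewrite le_eqVlt => /orP[/eqP d0|d_gt0].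
  by rewrite -d0 powR0 ?mulr0 ?enorm_ge0 // subr_eq0 gt_eqF.
set d := dist_set S u in d_gt0 *; set P := d `^ (p - 1).
apply/ler_addgt0Pr => e e0; have [delta delta0 descent_e] := descent e e0.
apply: (@ler_of_perturbation _ _ _ p (Order.min (1 / 2) (delta / (2 * d)))).
- by rewrite addr_ge0 ?enorm_ge0 ?ltW.
- exact: ltW p0.
- by rewrite lt_min !divr_gt0 ?mulr_gt0.
move=> t t0; rewrite lt_min => /andP[t_half t_delta].
have [v [/andP[vu0 vu] steep]] := dist_pow_steep_descent d_gt0 (introT andP (conj t0 t_half)).
have vu_delta : enorm (v - u) < delta.
  apply: le_lt_trans vu _; rewrite ltr_pdivlMr ?mulr_gt0 // in t_delta.
  apply: le_lt_trans t_delta; rewrite -mulrA ler_wpM2l ?(ltW t0) // mulrC ler_wpM2r ?(ltW d_gt0) //.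
  have t1 : t <= 1 by apply: (le_trans (ltW t_half)); rewrite ler_pdivrMr // mul1r ler1n.
  by rewrite -[2]/(1 + 1 : R) lerD2l expr_le1 // ltW.
have pt0 : 0 <= 1 + p * t by rewrite addr_ge0 // mulr_ge0 // ltW.
rewrite -(ler_pM2l (mulr_gt0 t0 d_gt0)).
have -> : t * d * (mu * P * (1 - t)) = t * (1 - t) * (mu * d `^ p).
  by rewrite -(mulr_powRB1 (ltW d_gt0) p0) -/P; ring.
have -> : t * d * ((1 + p * t) * (1 + t ^+ 2) * (enorm xs + e)) =
    (1 + p * t) * ((e + enorm xs) * (t * d * (1 + t ^+ 2))) by ring.
apply: (le_trans steep); rewrite ler_wpM2l // (le_trans (descent_e v vu0 vu_delta)) //.
by rewrite ler_wpM2l // addr_ge0 ?enorm_ge0 // ltW.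
Qed.

Lemma limiting_subdiff_dist_pow x xs : xs \in limiting_subdiff f x ->
  mu * dist_set S x `^ (p - 1) <= enorm xs.
Proof.
rewrite inE => -[u [us [ux usxs _ us_sub]]].
have := dist_set_ge0 S0 x; rewrite le_eqVlt => /orP[/eqP d0|d_gt0].
  by rewrite -d0 powR0 ?mulr0 ?enorm_ge0 // subr_eq0 gt_eqF.
have powR_cont : {for dist_set S x, continuous (fun r : R => r `^ (p - 1))}.
  have := @derivable_powR R 1 (p - 1) (dist_set S x).
  by rewrite in_itv /= d_gt0 => /(_ isT)/derivable1_diffP/differentiable_continuous.
apply: (@ler_cvg_to _ \oo _ _ (fun n => mu * dist_set S (u n) `^ (p - 1)) (fun n => enorm (us n))).
- apply: cvgM; first exact: cvg_cst.
  apply: (continuous_cvg _ powR_cont).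
  exact: econv_lipschitz_cvg (dist_set_lipschitz S0) ux.
- exact: econv_lipschitz_cvg enorm_lipschitz usxs.
- by apply: nearW => n; apply: frechet_subdiff_dist_pow.
Qed.

End DistPow.

Theorem proposition1 (R : realType) (N : nat) (Omega : set 'rV[R]_N)
  (hclosed : closed Omega) (hne : Omega !=set0) (p mu : R)
  (hp : 1 < p) (hmu : 0 < mu) :
  let f := fun x : 'rV[R]_N => mu / p * (dist_set Omega x) `^ p in
  (forall x : 'rV[R]_N,
      mu / p * (dist_set (argmin_set f) x) `^ p <= f x - inf_val f) /\
  (forall (x xs : 'rV[R]_N), xs \in limiting_subdiff f x ->
      mu * (dist_set (argmin_set f) x) `^ (p - 1) <= enorm xs).
Proof.
move=> f; change f with (dist_pow Omega p mu).
have argmin_sup := sub_argmin_dist_pow hne hp hmu.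
have argmin0 : argmin_set f !=set0 by case: hne => y /argmin_sup; exists y.
have dist_argmin_le x := dist_setS hne x argmin_sup.
have p0 : 0 < p by apply: lt_trans hp.
split=> [x | x xs /(limiting_subdiff_dist_pow hne hp hmu) lim_bound].
  rewrite (inf_val_dist_pow hne hp hmu) subr0 ler_pM2l ?divr_gt0 //.
  by apply: ge0_ler_powR; rewrite ?nnegrE ?dist_set_ge0 // ltW.
apply: le_trans lim_bound; rewrite ler_pM2l //.
by apply: ge0_ler_powR; rewrite ?nnegrE ?dist_set_ge0 // subr_ge0 ltW.
Qed.
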